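(* For any $n$-qubit pure state $\ket{\psi}$, $\Lambda_{\max}(\ket{\psi})\le\sqrt{1-\frac{\mathcal{C}(\ket{\psi})^2}{2}}$, and hence $E_g(\ket{\psi})\ge\frac{\mathcal{C}(\ket{\psi})^2}{2}$.
   Context: $\Lambda_{\max}(\ket{\psi})=\max|\langle\phi|\psi\rangle|$, the maximum over fully product states $\ket{\phi}=\bigotimes_{i=1}^n\ket{a_i}$ of single-qubit pure states; the geometric measure of entanglement is $E_g(\ket{\psi})=1-\Lambda_{\max}(\ket{\psi})^2$. $\mathcal{C}(\ket{\psi})=1-\frac{1}{2^{n}}\sum_{\alpha\subseteq [n]}\mathrm{Tr}[\rho_\alpha^2]$, with $\rho_\alpha$ the reduced state on $\alpha$ and $\mathrm{Tr}[\rho_\emptyset^2]=1$. *)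

From HB Require Import structures.
From mathcomp Require Import all_boot all_order all_algebra.
From mathcomp Require Import complex.
From mathcomp Require Import classical_sets reals.
Set Implicit Arguments. Unset Strict Implicit. Unset Printing Implicit Defensive.
Import Order.TTheory GRing.Theory Num.Theory.
Local Open Scope ring_scope.

(* Computational basis of n qubits: bit strings x : 'I_n -> bool. *)
Definition cfg (n : nat) := {ffun 'I_n -> bool}.

Section Qubits.
Variable R : realType.
Local Notation C := (R[i]).

Definition cabs (z : C) : R := Normc.normc z.

Definition pure_state (n : nat) (psi : cfg n -> C) : Prop :=
  \sum_(x : cfg n) cabs (psi x) ^+ 2 = 1.

(* A single-qubit pure state a = a.1 |0> + a.2 |1>, normalized. *)
Definition qubit_state (a : C * C) : Prop := cabs a.1 ^+ 2 + cabs a.2 ^+ 2 = 1.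

Definition prod_amp (n : nat) (a : 'I_n -> C * C) (x : cfg n) : C :=
  \prod_(i : 'I_n) (if x i then (a i).2 else (a i).1).

Definition inner (n : nat) (phi psi : cfg n -> C) : C :=
  \sum_(x : cfg n) conjc (phi x) * psi x.

Definition Lambda_max (n : nat) (psi : cfg n -> C) : R :=
  sup [set r : R | exists a : 'I_n -> C * C,
         (forall i, qubit_state (a i)) /\ r = cabs (inner (prod_amp a) psi)]%classic.

Definition geometric_measure (n : nat) (psi : cfg n -> C) : R :=
  1 - Lambda_max psi ^+ 2.

Definition glue (n : nat) (alpha : {set 'I_n}) (x z : cfg n) : cfg n :=
  [ffun i => if i \in alpha then x i else z i].

(* basis strings of the subsystem alpha (coordinates outside alpha set to 0) *)
Definition supp_on (n : nat) (alpha : {set 'I_n}) (x : cfg n) : bool :=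
  [forall i, (i \notin alpha) ==> ~~ x i].

(* reduced density matrix rho_alpha = Tr_{complement alpha} |psi><psi| *)
Definition rho (n : nat) (alpha : {set 'I_n}) (psi : cfg n -> C) (x y : cfg n) : C :=
  \sum_(z : cfg n | supp_on (~: alpha) z)
     psi (glue alpha x z) * conjc (psi (glue alpha y z)).

Definition purity (n : nat) (alpha : {set 'I_n}) (psi : cfg n -> C) : C :=
  \sum_(x : cfg n | supp_on alpha x) \sum_(y : cfg n | supp_on alpha y)
     rho alpha psi x y * rho alpha psi y x.

(* C(psi) = 1 - 2^{-n} sum_alpha Tr[rho_alpha^2]  (real part taken; the
   purity is real) *)
Definition concentratable (n : nat) (psi : cfg n -> C) : R :=
  1 - (2 ^+ n)^-1 * \sum_(alpha : {set 'I_n}) @complex.Re R (purity alpha psi).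

End Qubits.

From mathcomp Require Import all_boot all_order all_algebra.
From mathcomp Require Import complex.
From mathcomp Require Import classical_sets reals.
From mathcomp Require Import ring lra.
Set Implicit Arguments. Unset Strict Implicit. Unset Printing Implicit Defensive.
Import Order.TTheory GRing.Theory Num.Theory.
Local Open Scope ring_scope.

(* Put Psi = psi (x) psi on two copies of the n qubits and let S_alpha exchange the qubits
   in alpha between the copies.  Then Tr rho_alpha^2 = <Psi o S_alpha, Psi>, and since the
   S_alpha compose like symmetric differences, Q = sum_alpha Psi o S_alpha has
   |Q|^2 = 2^n sum_alpha Tr rho_alpha^2 = 4^n (1 - C).  For a product state phi the vector
   Phi = phi (x) phi is fixed by every S_alpha, so <Phi, Q> = 2^n <phi, psi>^2, and
   Cauchy-Schwarz gives |<phi, psi>|^4 <= 1 - C.  With s = |<phi, psi>|^2 this yields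
   C^2 <= (1 - s^2)^2 <= 2 (1 - s), that is s <= 1 - C^2 / 2. *)

Lemma card_finset (T : finType) : #|{set T}| = (2 ^ #|T|)%N.
Proof. by rewrite -[LHS]cardsT -powersetT card_powerset cardsT. Qed.

Lemma sum_subsets_const (V : pzSemiRingType) (n : nat) (c : V) :
  \sum_(A : {set 'I_n}) c = 2 ^+ n * c.
Proof. by rewrite sumr_const card_finset card_ord -natrX mulr_natl. Qed.

Section DotProduct.
Variable R : rcfType.
Local Notation C := R[i].

Definition dotc (T : finType) (f g : T -> C) : C := \sum_t conjc (f t) * g t.

Definition tensor (T1 T2 : finType) (f : T1 -> C) (g : T2 -> C) (p : T1 * T2) : C :=
  f p.1 * g p.2.

Variable T : finType.
Implicit Types (f g : T -> C) (c : C).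

Lemma dotcJ f g : conjc (dotc f g) = dotc g f.
Proof.
rewrite /dotc rmorph_sum; apply: eq_bigr => t _.
by rewrite rmorphM /= conjcK mulrC.
Qed.

Lemma dotc_ge0 f : 0 <= dotc f f.
Proof. by apply: sumr_ge0 => t _; rewrite mulrC mulcJ_ge0. Qed.

Lemma dotcZl c f g : dotc (fun t => c * f t) g = conjc c * dotc f g.
Proof. by rewrite /dotc big_distrr; apply: eq_bigr => t _; rewrite rmorphM -mulrA. Qed.

Lemma dotcZr c f g : dotc f (fun t => c * g t) = c * dotc f g.
Proof. by rewrite /dotc big_distrr; apply: eq_bigr => t _; rewrite mulrCA. Qed.

Lemma dotcBB f g :
  dotc (fun t => f t - g t) (fun t => f t - g t)
  = dotc f f + dotc g g - (dotc f g + dotc g f).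
Proof.
rewrite /dotc -!big_split -sumrB; apply: eq_bigr => t _.
by rewrite rmorphB /=; ring.
Qed.

Lemma dotc_add_le f g : dotc f g + dotc g f <= dotc f f + dotc g g.
Proof. by rewrite -subr_ge0 -dotcBB dotc_ge0. Qed.

Lemma cauchy_schwarz_unit f g :
  dotc f f = 1 -> dotc f g * conjc (dotc f g) <= dotc g g.
Proof.
move=> f1; set t := dotc f g.
have := dotc_ge0 (fun s => g s - t * f s).
rewrite dotcBB !dotcZl !dotcZr f1 -(dotcJ f g) -/t => H.
by rewrite -subr_ge0; move: H; congr (0 <= _); ring.
Qed.

Lemma dotc_suml (I : finType) (F : I -> T -> C) g :
  dotc (fun t => \sum_i F i t) g = \sum_i dotc (F i) g.
Proof.
rewrite /dotc exchange_big /=; apply: eq_bigr => t _.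
by rewrite rmorph_sum big_distrl.
Qed.

Lemma dotc_sumr (I : finType) f (G : I -> T -> C) :
  dotc f (fun t => \sum_i G i t) = \sum_i dotc f (G i).
Proof. by rewrite /dotc exchange_big /=; apply: eq_bigr => t _; rewrite big_distrr. Qed.

Lemma dotc_compl (s : T -> T) f g : involutive s -> dotc (f \o s) g = dotc f (g \o s).
Proof.
by move=> sK; rewrite /dotc (reindex_inj (inv_inj sK)); apply: eq_bigr => t _ /=; rewrite sK.
Qed.

Lemma dotc_comp (s : T -> T) f g : involutive s -> dotc (f \o s) (g \o s) = dotc f g.
Proof. by move=> sK; rewrite dotc_compl //; apply: eq_bigr => t _; rewrite /= sK. Qed.

End DotProduct.

Lemma dotc_tensor (R : rcfType) (T1 T2 : finType) (f1 g1 : T1 -> R[i]) (f2 g2 : T2 -> R[i]) :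
  dotc (tensor f1 f2) (tensor g1 g2) = dotc f1 g1 * dotc f2 g2.
Proof.
rewrite /dotc big_distrlr pair_bigA /=; apply: eq_bigr => -[u v] _.
by rewrite /tensor rmorphM /= mulrACA.
Qed.


Section Bitstrings.
Variable n : nat.
Implicit Types (alpha beta : {set 'I_n}) (u v x z : cfg n) (p : cfg n * cfg n).

Definition proj_on alpha u : cfg n := [ffun i => (i \in alpha) && u i].

Lemma supp_on_proj alpha u : supp_on alpha (proj_on alpha u).
Proof. by apply/forallP => i; rewrite ffunE; case: (i \in alpha). Qed.

Lemma glue_proj alpha u v :
  glue alpha (proj_on alpha u) (proj_on (~: alpha) v) = glue alpha u v.
Proof. by apply/ffunP => i; rewrite !ffunE inE; case: (i \in alpha). Qed.

Lemma glue_same alpha u : glue alpha u u = u.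
Proof. by apply/ffunP => i; rewrite !ffunE; case: (i \in alpha). Qed.

Lemma proj_glue alpha x z : supp_on alpha x -> proj_on alpha (glue alpha x z) = x.
Proof.
move/forallP => xa; apply/ffunP => i; rewrite !ffunE.
by case: (boolP (i \in alpha)) => //= ia; move: (xa i); rewrite ia; case: (x i).
Qed.

Lemma projC_glue alpha x z :
  supp_on (~: alpha) z -> proj_on (~: alpha) (glue alpha x z) = z.
Proof.
move/forallP => za; apply/ffunP => i; rewrite !ffunE inE.
by case: (boolP (i \in alpha)) => //= ia; move: (za i); rewrite inE ia; case: (z i).
Qed.

Lemma big_supp_on_split (V : nmodType) alpha (F : cfg n -> cfg n -> V) :
  \sum_(x | supp_on alpha x) \sum_(z | supp_on (~: alpha) z) F x z
  = \sum_u F (proj_on alpha u) (proj_on (~: alpha) u).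
Proof.
rewrite pair_big_dep (reindex (fun u => (proj_on alpha u, proj_on (~: alpha) u))) /=.
  by apply: eq_bigl => u; rewrite !supp_on_proj.
exists (fun p => glue alpha p.1 p.2) => [u _ | [x z]] /=.
  by rewrite glue_proj glue_same.
by rewrite inE => /andP[xa za]; rewrite proj_glue // projC_glue.
Qed.

Definition swap_on alpha p : cfg n * cfg n := (glue alpha p.2 p.1, glue alpha p.1 p.2).

Definition symdiff alpha beta : {set 'I_n} := [set i | (i \in alpha) != (i \in beta)].

Lemma swap_onK alpha : involutive (swap_on alpha).
Proof.
by move=> [u v]; congr pair; apply/ffunP => i; rewrite !ffunE; case: (i \in alpha).
Qed.

Lemma swap_on_comp alpha beta p :
  swap_on alpha (swap_on beta p) = swap_on (symdiff alpha beta) p.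
Proof.
by case: p => u v; congr pair; apply/ffunP => i; rewrite !ffunE inE;
  case: (i \in alpha); case: (i \in beta).
Qed.

Lemma symdiffK alpha : involutive (symdiff alpha).
Proof.
by move=> beta; apply/setP => i; rewrite !inE; case: (i \in alpha); case: (i \in beta).
Qed.

End Bitstrings.

Lemma le_one_sub_half_sqr (F : realFieldType) (s k : F) :
  0 <= s -> s ^+ 2 <= k -> k <= 1 -> s <= 1 - (1 - k) ^+ 2 / 2.
Proof.
move=> s0 sk k1.
have s1 : s <= 1 by nra.
have h1 : (1 - k) ^+ 2 <= (1 - s ^+ 2) ^+ 2 by nra.
have h2 : (1 - s ^+ 2) * (1 + s) <= 2 by nra.
have h3 : (1 - s ^+ 2) ^+ 2 <= 2 * (1 - s) by nra.
lra.
Qed.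

Section Qubits.
Variable R : realType.
Local Notation C := R[i].

Lemma sqr_cabs (z : C) : (cabs z ^+ 2)%:C%C = z * conjc z.
Proof. by rewrite -sqr_normc rmorphXn. Qed.

Lemma cabs_ge0 (z : C) : 0 <= cabs z.
Proof. by case: z => a b; apply: sqrtr_ge0. Qed.

Lemma dotc_cabs (T : finType) (f : T -> C) : dotc f f = (\sum_t cabs (f t) ^+ 2)%:C%C.
Proof. by rewrite rmorph_sum; apply: eq_bigr => t _; rewrite /= sqr_cabs mulrC. Qed.

Variable n : nat.
Implicit Types (psi : cfg n -> C) (a : 'I_n -> C * C) (alpha beta : {set 'I_n}).

Lemma innerE (phi psi : cfg n -> C) : inner phi psi = dotc phi psi.
Proof. by []. Qed.

Lemma dotc_pure_state psi : pure_state psi -> dotc psi psi = 1.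
Proof. by rewrite dotc_cabs => ->. Qed.

Lemma dotc_prod_amp a : (forall i, qubit_state (a i)) -> dotc (prod_amp a) (prod_amp a) = 1.
Proof.
move=> a_unit; rewrite /dotc.
under eq_bigr => x _ do rewrite /prod_amp rmorph_prod -big_split /=.
rewrite -(bigA_distr_bigA (fun i (b : bool) =>
  conjc (if b then (a i).2 else (a i).1) * (if b then (a i).2 else (a i).1))) /=.
apply: big1 => i _; rewrite big_bool /= addrC ![conjc _ * _]mulrC -!sqr_cabs.
by rewrite -rmorphD a_unit.
Qed.

Lemma purity_dotc alpha psi :
  purity alpha psi = dotc (tensor psi psi \o swap_on alpha) (tensor psi psi).
Proof.
rewrite /purity /rho.
under eq_bigr => x _ do under eq_bigr => y _ do rewrite big_distrlr /=.
under eq_bigr => x _ do rewrite exchange_big /=.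
under eq_bigr => x _ do under eq_bigr => z _ do rewrite big_supp_on_split.
rewrite big_supp_on_split pair_bigA /=; apply: eq_bigr => -[u v] _ /=.
by rewrite !glue_proj !glue_same /tensor /= rmorphM /= mulrACA mulrC.
Qed.

Definition swap_sum psi (p : cfg n * cfg n) : C :=
  \sum_alpha tensor psi psi (swap_on alpha p).

Lemma dotc_swap_on psi alpha beta :
  dotc (tensor psi psi \o swap_on alpha) (tensor psi psi \o swap_on beta)
  = purity (symdiff alpha beta) psi.
Proof.
rewrite purity_dotc -dotc_compl; last exact: swap_onK.
by apply: eq_bigr => p _; rewrite /= swap_on_comp.
Qed.

Lemma dotc_swap_sum psi :
  dotc (swap_sum psi) (swap_sum psi) = 2 ^+ n * \sum_alpha purity alpha psi.
Proof.
rewrite dotc_suml -sum_subsets_const; apply: eq_bigr => alpha _.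
rewrite dotc_sumr (reindex_inj (inv_inj (symdiffK alpha))) /=.
by apply: eq_bigr => beta _; rewrite dotc_swap_on symdiffK.
Qed.

Lemma tensor_prod_amp_swap_on a alpha p :
  tensor (prod_amp a) (prod_amp a) (swap_on alpha p) = tensor (prod_amp a) (prod_amp a) p.
Proof.
rewrite /tensor /prod_amp -!big_split /=; apply: eq_bigr => i _; rewrite !ffunE.
by case: (i \in alpha); rewrite // mulrC.
Qed.

Lemma dotc_prod_amp_swap_sum a psi :
  dotc (tensor (prod_amp a) (prod_amp a)) (swap_sum psi)
  = 2 ^+ n * inner (prod_amp a) psi ^+ 2.
Proof.
rewrite dotc_sumr -sum_subsets_const; apply: eq_bigr => alpha _.
rewrite innerE expr2 -dotc_tensor.
rewrite -[dotc _ (fun p => _)]/(dotc _ (_ \o swap_on alpha)) -dotc_compl; last exact: swap_onK.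
by apply: eq_bigr => p _; rewrite /= tensor_prod_amp_swap_on.
Qed.

Definition mean_purity psi : R := (2 ^+ n)^-1 * \sum_alpha complex.Re (purity alpha psi).

Lemma concentratableE psi : concentratable psi = 1 - mean_purity psi.
Proof. by []. Qed.

Lemma Re_purity_le1 alpha psi : pure_state psi -> complex.Re (purity alpha psi) <= 1.
Proof.
move=> psi_pure.
have := dotc_add_le (tensor psi psi \o swap_on alpha) (tensor psi psi).
rewrite -purity_dotc -dotcJ -purity_dotc dotc_comp; last exact: swap_onK.
rewrite dotc_tensor dotc_pure_state // mul1r -lecR ReJ_add rmorph1.
by rewrite ler_pdivrMr ?ltr0n // mul1r.
Qed.

Lemma sum_purity_ge0 psi : 0 <= \sum_alpha purity alpha psi.
Proof. by rewrite -(pmulr_rge0 _ (exprn_gt0 n (ltr0Sn _ 1))) -dotc_swap_sum dotc_ge0. Qed.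

Lemma sum_purityE psi :
  \sum_alpha purity alpha psi = (2 ^+ n * mean_purity psi)%:C%C.
Proof.
rewrite /mean_purity mulrA mulfV ?expf_neq0 ?pnatr_eq0 // mul1r.
by rewrite -raddf_sum RRe_real ?ger0_real ?sum_purity_ge0.
Qed.

Lemma mean_purity_ge0 psi : 0 <= mean_purity psi.
Proof.
have := sum_purity_ge0 psi.
by rewrite sum_purityE ler0c pmulr_rge0 // exprn_gt0.
Qed.

Lemma mean_purity_le1 psi : pure_state psi -> mean_purity psi <= 1.
Proof.
move=> psi_pure; rewrite /mean_purity ler_pdivrMl ?exprn_gt0 // mulr1.
rewrite -[2 ^+ n]mulr1 -sum_subsets_const.
by apply: ler_sum => alpha _; apply: Re_purity_le1.
Qed.

Lemma overlap_pow4_le_mean_purity a psi :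
  pure_state psi -> (forall i, qubit_state (a i)) ->
  cabs (inner (prod_amp a) psi) ^+ 4 <= mean_purity psi.
Proof.
move=> psi_pure a_unit.
have phi2_unit : dotc (tensor (prod_amp a) (prod_amp a)) (tensor (prod_amp a) (prod_amp a)) = 1.
  by rewrite dotc_tensor dotc_prod_amp // mulr1.
have := cauchy_schwarz_unit (swap_sum psi) phi2_unit.
rewrite dotc_prod_amp_swap_sum dotc_swap_sum sum_purityE.
set s := inner _ _.
have two_n_real : (2 ^+ n : R)%:C%C = 2 ^+ n by rewrite rmorphXn rmorph_nat.
have two_n_conj : conjc (2 ^+ n : C) = 2 ^+ n by rewrite -two_n_real conjc_real.
have cabs4 : (cabs s ^+ 4)%:C%C = (s * conjc s) ^+ 2.
  by rewrite -sqr_cabs -(rmorphXn (real_complex R)) -exprM.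
have -> : 2 ^+ n * s ^+ 2 * conjc (2 ^+ n * s ^+ 2) = 2 ^+ n * 2 ^+ n * (s * conjc s) ^+ 2.
  by rewrite rmorphM /= two_n_conj [conjc _]rmorphXn /=; ring.
rewrite -cabs4 -two_n_real -!rmorphM lecR (mulrA (2 ^+ n)) ler_pM2l //.
by rewrite mulr_gt0 // exprn_gt0.
Qed.

Lemma qubit_state_ket0 : qubit_state ((1, 0) : C * C).
Proof. by rewrite /qubit_state /cabs Normc.normc1 Normc.normc0 expr1n expr0n addr0. Qed.

Lemma Lambda_max_le psi b :
  (forall a, (forall i, qubit_state (a i)) -> cabs (inner (prod_amp a) psi) <= b) ->
  0 <= Lambda_max psi <= b.
Proof.
move=> overlap_le; rewrite /Lambda_max; set E := (X in sup X).
pose a0 := fun _ : 'I_n => ((1 : C), (0 : C)).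
have E_a0 : E (cabs (inner (prod_amp a0) psi)).
  by exists a0; split=> // i; apply: qubit_state_ket0.
have E_ub : ubound E b by move=> _ [a [a_unit ->]]; apply: overlap_le.
apply/andP; split; last by apply: ge_sup => //; exists (cabs (inner (prod_amp a0) psi)).
apply: le_trans (cabs_ge0 _) (sup_upper_bound _ E_a0).
by split; [exists (cabs (inner (prod_amp a0) psi)) | exists b].
Qed.

Lemma overlap_le_sqrt psi a :
  pure_state psi -> (forall i, qubit_state (a i)) ->
  cabs (inner (prod_amp a) psi) <= Num.sqrt (1 - concentratable psi ^+ 2 / 2).
Proof.
move=> psi_pure a_unit; rewrite -(ger0_norm (cabs_ge0 _)) -sqrtr_sqr ler_wsqrtr //.
rewrite concentratableE; apply: le_one_sub_half_sqr; rewrite ?sqr_ge0 ?mean_purity_le1 //.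
by rewrite -exprM; apply: overlap_pow4_le_mean_purity.
Qed.

End Qubits.

Theorem mainTheorem15 (R : realType) (n : nat) (psi : cfg n -> R[i]) :
  pure_state psi ->
  Lambda_max psi <= Num.sqrt (1 - concentratable psi ^+ 2 / 2) /\
  concentratable psi ^+ 2 / 2 <= geometric_measure psi.
Proof.
move=> psi_pure.
have /andP[L_ge0 L_le] := Lambda_max_le (fun a => overlap_le_sqrt psi_pure (a := a)).
split=> //; rewrite /geometric_measure.
have X_ge0 : 0 <= 1 - concentratable psi ^+ 2 / 2.
  have := mean_purity_ge0 psi; have := mean_purity_le1 psi_pure.
  by rewrite concentratableE; nra.
suff : Lambda_max psi ^+ 2 <= 1 - concentratable psi ^+ 2 / 2 by lra.
by rewrite -(sqr_sqrtr X_ge0) ler_pXn2r ?nnegrE ?sqrtr_ge0.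
Qed.
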